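(* Let $q$ be a square prime power and let $\mathcal{B}$ be a Baer subplane of $PG(2,q)$; let $n=q+\sqrt{q}+1$. Then $\mathcal{B}$ is an optimal $(1,\mu)$-saturating $n$-set with $\mu=\frac{1}{2}(q+\sqrt{q})$. A linear code $C$ over $\mathbb{F}_q$ corresponding to $\mathcal{B}$ is an $[n,n-3,3]_q$ code with covering radius $2$, and it is a $(2,\mu)$-APMCF code.
   Context: $PG(N,q)$ is the $N$-dimensional projective space over $\mathbb{F}_q$. A Baer subplane of $PG(2,q)$, $q$ a square, is a subplane of order $\sqrt q$ (e.g. the set of points having homogeneous coordinates in $\mathbb{F}_{\sqrt q}$). For a point set $S$, a secant of $S$ is a line $\ell$ with $|\ell\cap S|\ge2$, counted with multiplicity $\binom{|\ell\cap S|}{2}$. A set $S$ of $n$ points of $PG(N,q)$ is a $(1,\mu)$-saturating $n$-set if (M1) $S$ spans $PG(N,q)$, (M2) $S\neq PG(N,q)$, and (M3) every point $Q\notin S$ lies on secants of $S$ whose multiplicities sum to at least $\mu$; it is optimal if for every $Q\notin S$ this sum is exactly $\mu$. A linear code of length $n$ over $\mathbb{F}_q$ corresponds to $S=\{P_1,\dots,P_n\}\subset PG(N,q)$ if it has a parity-check matrix whose $i$-th column is a homogeneous coordinate vector of $P_i$. An $[n,k,d]_q$ code is a linear code of length $n$, dimension $k$ and minimum distance $d$; its covering radius $R$ is $\max_{x\in\mathbb{F}_q^n} d(x,C)$ (Hamming distance). A code $C$ with covering radius $R$ is an $(R,\mu)$-APMCF code if every $x\in\mathbb{F}_q^n$ with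 $d(x,C)=R$ is at distance exactly $R$ from exactly $\mu$ codewords. *)

From mathcomp Require Import all_boot all_order all_algebra.
Set Implicit Arguments. Unset Strict Implicit. Unset Printing Implicit Defensive.
Import GRing.Theory.
Local Open Scope ring_scope.

Section ProjGeom.
Variable F : finFieldType.

Definition pnormal k (v : 'rV[F]_k) : bool :=
  [exists i : 'I_k, (v 0 i == 1) && [forall j : 'I_k, (j < i)%N ==> (v 0 j == 0)]].

(** Points of PG(N, F): 1-dim subspaces of F^(N+1), via normalized representative. *)
Definition point (N : nat) := {v : 'rV[F]_N.+1 | pnormal v}.

Variable N : nat.

Definition pvec (P : point N) : 'rV[F]_N.+1 := val P.

Definition pline (P Q : point N) : {set point N} :=
  [set R : point N | (pvec R <= col_mx (pvec P) (pvec Q))%MS].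

Definition plines : {set {set point N}} :=
  [set l : {set point N} | [exists P : point N, exists Q : point N,
                               (P != Q) && (l == pline P Q)]].

Definition pcollinear (P Q R : point N) : bool :=
  (\rank (col_mx (pvec P) (col_mx (pvec Q) (pvec R))) <= 2)%N.

Definition secmult (S : {set point N}) (Q : point N) : nat :=
  (\sum_(l in plines | (Q \in l) && (1 < #|l :&: S|)%N) 'C(#|l :&: S|, 2))%N.

Definition spans (S : {set point N}) : bool :=
  row_full (\sum_(P in S) <<pvec P>>)%MS.

Definition saturating (S : {set point N}) (mu : nat) : Prop :=
  [/\ spans S, S != [set: point N] &
      forall Q, Q \notin S -> (mu <= secmult S Q)%N].

Definition optimal_saturating (S : {set point N}) (mu : nat) : Prop :=
  saturating S mu /\ forall Q, Q \notin S -> secmult S Q = mu.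

Definition subplane_of_order (m : nat) (S : {set point N}) : Prop :=
  exists L : {set {set point N}},
  [/\ L \subset plines,
      forall P Q, P \in S -> Q \in S -> P != Q ->
        #|[set l in L | (P \in l) && (Q \in l)]| = 1%N,
      forall l1 l2, l1 \in L -> l2 \in L -> l1 != l2 ->
        #|l1 :&: l2 :&: S| = 1%N,
      (exists P1 P2 P3 P4,
        [/\ [&& P1 \in S, P2 \in S, P3 \in S & P4 \in S],
            uniq [:: P1; P2; P3; P4] &
            [&& ~~ pcollinear P1 P2 P3, ~~ pcollinear P1 P2 P4,
                ~~ pcollinear P1 P3 P4 & ~~ pcollinear P2 P3 P4]]) &
      forall l, l \in L -> #|l :&: S| = m.+1].

End ProjGeom.

(** Baer subplane of PG(2,q), q = r^2: subplane of order r. *)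
Definition baer_subplane (F : finFieldType) (r : nat) (S : {set point F 2}) : Prop :=
  subplane_of_order r S.

Section Codes.
Variable F : finFieldType.
Variable n : nat.

(** A linear code of length n is represented by a matrix whose row space is the code. *)
Definition codeset (C : 'M[F]_n) : {set 'rV[F]_n} := [set x | (x <= C)%MS].

Definition wt (x : 'rV[F]_n) : nat := #|[set i : 'I_n | x 0 i != 0]|.
Definition hdist (x y : 'rV[F]_n) : nat := wt (x - y).

Definition code_dim (C : 'M[F]_n) : nat := \rank C.

Definition min_dist (C : 'M[F]_n) : nat :=
  \big[minn/n]_(c in codeset C | c != 0) wt c.

(** d(x, C) = min over codewords (all distances are <= n). *)
Definition dist_code (C : 'M[F]_n) (x : 'rV[F]_n) : nat :=
  \big[minn/n]_(c in codeset C) hdist x c.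

Definition covering_radius (C : 'M[F]_n) : nat :=
  \max_(x : 'rV[F]_n) dist_code C x.

Definition is_APMCF (C : 'M[F]_n) (R mu : nat) : Prop :=
  covering_radius C = R /\
  forall x, dist_code C x = R -> #|[set c in codeset C | hdist x c == R]| = mu.

(** Code with parity-check matrix H: {x | H x^T = 0} = row space of kermx H^T. *)
Definition code_of_pcm m (H : 'M[F]_(m, n)) : 'M[F]_n := kermx H^T.

End Codes.

Definition pcm_of_points (F : finFieldType) (N n : nat)
    (H : 'M[F]_(N.+1, n)) (S : {set point F N}) : Prop :=
  exists Pt : 'I_n -> point F N,
    [/\ injective Pt, S = [set Pt i | i : 'I_n] &
        forall i, ((col i H)^T == pvec (Pt i))%MS].

From mathcomp Require Import all_boot all_order all_algebra zify.

(* A Baer subplane B of PG(2,q), q = r^2, has q + r + 1 points, more than the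
   q + 1 points of a line, so the projection from a point Q off B is not
   injective on B: Q lies on a secant. Two secants through Q would meet in a
   point of B, hence this secant is unique; it carries r + 1 points of B,
   giving 'C(r + 1, 2) = (q + r)/2 pairs. For the code whose parity-check
   columns are the points of B, distinct points are independent, so nonzero
   codewords have weight at least 3, and three collinear points of B give one
   of weight 3. Every syndrome is a multiple of a point of B or lies on a
   secant, so it is reached by weight at most 2; a syndrome off B needs weight
   2, and its weight-2 error patterns correspond to the pairs of points of B
   whose line contains the syndrome point. *)

Set Implicit Arguments.
Unset Strict Implicit.
Unset Printing Implicit Defensive.
Import GRing.Theory.

Lemma card_finField_gt1 (F : finFieldType) : (1 < #|F|)%N.
Proof. by rewrite (cardD1 0%R) (cardD1 1%R) !inE oner_eq0. Qed.

Lemma geometric_sum_mul (q k : nat) : (0 < q)%N ->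
  ((\sum_(i < k) q ^ i) * (q - 1) = q ^ k - 1)%N.
Proof.
move=> q_gt0; elim: k => [|k IHk]; first by rewrite big_ord0.
rewrite big_ord_recr /= mulnDl IHk expnS.
have : (0 < q ^ k)%N by rewrite expn_gt0 q_gt0.
move: (q ^ k) => a; nia.
Qed.

Lemma double_counting (T1 T2 : finType) (A : {set T1}) (B : {set T2})
    (R : T1 -> T2 -> bool) :
  (\sum_(x in A) #|[set y in B | R x y]| = \sum_(y in B) #|[set x in A | R x y]|)%N.
Proof.
have cardE (T : finType) (D : {set T}) (P : pred T) :
    #|[set z in D | P z]| = (\sum_(z in D) P z)%N.
  by rewrite -sum1_card big_mkcond [RHS]big_mkcond; apply: eq_bigr => z _;
     rewrite inE; case: (z \in D); case: (P z).
under eq_bigr do rewrite cardE.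
under [RHS]eq_bigr do rewrite cardE.
exact: exchange_big.
Qed.

Lemma geq_bigminn_cond (I : finType) (P : pred I) (f : I -> nat) d i0 :
  P i0 -> (\big[minn/d]_(i | P i) f i <= f i0)%N.
Proof.
move=> Pi0; have : i0 \in index_enum I by rewrite mem_index_enum.
elim: (index_enum I) => //= a s IHs; rewrite in_cons big_cons.
case/orP => [/eqP <- | i0s]; first by rewrite Pi0 geq_minl.
by case: (P a); rewrite ?geq_min IHs ?orbT.
Qed.

Lemma leq_bigminn (I : finType) (P : pred I) (f : I -> nat) d m :
  (m <= d)%N -> (forall i, P i -> m <= f i)%N -> (m <= \big[minn/d]_(i | P i) f i)%N.
Proof. by move=> md mf; elim/big_ind: _ => // x y mx my; rewrite leq_min mx my. Qed.

Section ProjectivePoints.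
Variables (F : finFieldType) (N : nat).
Local Notation pt := (point F N).
Local Open Scope ring_scope.

Lemma pvec_neq0 (P : pt) : pvec P != 0.
Proof.
case: P => v v_normal; have /existsP [i /andP [/eqP vi _]] := v_normal.
rewrite /pvec /=; apply/eqP => v0; move: vi.
by rewrite v0 mxE => /eqP; rewrite eq_sym oner_eq0.
Qed.

Lemma exists_pvec_eqmx (v : 'rV[F]_N.+1) : v != 0 -> exists P : pt, (pvec P == v)%MS.
Proof.
move=> v_neq0.
have [i0 vi0] : exists i, v 0 i != 0.
  apply/existsP; apply: contraR v_neq0 => /existsPn v0; apply/eqP/rowP => j.
  by rewrite mxE; apply/eqP/negPn/v0.
have [i vi i_min] :=
  @arg_minnP _ i0 (fun j => v 0 j != 0) (fun j : 'I_N.+1 => j : nat) vi0.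
have w_normal : pnormal ((v 0 i)^-1 *: v).
  apply/existsP; exists i; rewrite !mxE mulVf // eqxx /=.
  apply/forallP => j; apply/implyP => ji; rewrite mxE.
  have [-> | vj] := eqVneq (v 0 j) 0; first by rewrite mulr0.
  by have := i_min j vj; rewrite leqNgt ji.
exists (exist _ ((v 0 i)^-1 *: v) w_normal); apply/eqmxP; apply: eqmx_scale.
by rewrite invr_eq0.
Qed.

(* Both representatives are normalized, so the scalar relating them is 1. *)
Lemma pvec_eqmx_inj (P Q : pt) : (pvec P == pvec Q)%MS -> P = Q.
Proof.
move=> /andP [/sub_rVP [c Pc] _]; apply: val_inj.
case: P Q Pc => [p p_normal] [u u_normal]; rewrite /pvec /= => Pc.
have /existsP [i /andP [/eqP pi /forallP p0]] := p_normal.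
have /existsP [k /andP [/eqP uk /forallP u0]] := u_normal.
have pE j : p 0 j = c * u 0 j by rewrite Pc mxE.
case: (ltngtP i k) => [ik | ki | /val_inj ik].
- move: pi; rewrite pE (eqP (implyP (u0 i) ik)) mulr0 => /eqP.
  by rewrite eq_sym oner_eq0.
- move: pi; have := eqP (implyP (p0 k) ki); rewrite !pE uk mulr1 => ->.
  by rewrite mul0r => /eqP; rewrite eq_sym oner_eq0.
- have c1 : c = 1 by move: (pE i); rewrite pi ik uk mulr1.
  by rewrite Pc c1 scale1r.
Qed.

Lemma pvec_sub_inj (P Q : pt) : (pvec P <= pvec Q)%MS -> P = Q.
Proof.
move=> PQ; apply: pvec_eqmx_inj.
by have [_ <-] := mxrank_leqif_eq PQ; rewrite !rank_rV !pvec_neq0.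
Qed.

Lemma card_rowspace m (U : 'M[F]_(m, N.+1)) :
  #|[set v : 'rV[F]_N.+1 | (v <= U)%MS]| = (#|F| ^ \rank U)%N.
Proof.
have -> : [set v : 'rV[F]_N.+1 | (v <= U)%MS] =
          [set x *m row_base U | x : 'rV[F]_(\rank U)].
  apply/setP => v; rewrite inE; apply/idP/imsetP => [|[x _ ->]].
    by rewrite -(eq_row_base U) => /submxP [x ->]; exists x.
  by rewrite (submx_trans (submxMl _ _)) // eq_row_base.
by rewrite card_imset ?card_mx ?mul1n //; apply: row_free_inj (row_base_free U).
Qed.

(* Each nonzero vector of the row space is a unique nonzero multiple of a
   unique normalized representative. *)
Lemma card_points_sub_mul m (U : 'M[F]_(m, N.+1)) :
  (#|[set P : pt | (pvec P <= U)%MS]| * (#|F| - 1))%N = (#|F| ^ \rank U - 1)%N.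
Proof.
set A := [set P : pt | (pvec P <= U)%MS].
set C := [set c : F | c != 0].
have cardC : #|C| = (#|F| - 1)%N.
  by rewrite subn1 -(cardsC1 (0 : F)); apply: eq_card => c; rewrite !inE.
have nonzero_vectors : [set v : 'rV[F]_N.+1 | (v <= U)%MS & v != 0] =
                       [set cP.1 *: pvec cP.2 | cP in setX C A].
  apply/setP => v; rewrite inE; apply/andP/imsetP => [[vU v_neq0] | [[c P]]].
    have [P /andP [Pv /sub_rVP [c vc]]] := exists_pvec_eqmx v_neq0.
    exists (c, P) => //; rewrite !inE /= (submx_trans Pv vU) andbT.
    by apply: contraNneq v_neq0 => c0; rewrite vc c0 scale0r.
  rewrite !inE /= => /andP [c_neq0 PU] ->.
  by rewrite scalemx_sub // scaler_eq0 negb_or c_neq0 pvec_neq0.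
have : #|[set v : 'rV[F]_N.+1 | (v <= U)%MS & v != 0]| = (#|F| ^ \rank U - 1)%N.
  rewrite -card_rowspace (cardsD1 0 [set v : 'rV_N.+1 | (v <= U)%MS]).
  rewrite inE sub0mx add1n subn1 /=.
  by apply: eq_card => v; rewrite !inE andbC.
rewrite nonzero_vectors card_in_imset ?cardsX ?cardC 1?mulnC //.
move=> [c P] [d Q]; rewrite !inE /= => /andP [c_neq0 _] /andP [d_neq0 _] cPdQ.
have PQ : P = Q.
  apply: pvec_eqmx_inj; apply/andP; split; apply/sub_rVP.
    by exists (c^-1 * d); rewrite -scalerA -cPdQ scalerA mulVf // scale1r.
  by exists (d^-1 * c); rewrite -scalerA cPdQ scalerA mulVf // scale1r.
rewrite -{}PQ in cPdQ *; congr (_, _); apply/eqP; rewrite -subr_eq0.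
have : (c - d) *: pvec P == 0 by rewrite scalerBl cPdQ subrr.
by rewrite scaler_eq0 (negbTE (pvec_neq0 P)) orbF.
Qed.

Lemma card_points_sub m (U : 'M[F]_(m, N.+1)) :
  #|[set P : pt | (pvec P <= U)%MS]| = (\sum_(i < \rank U) #|F| ^ i)%N.
Proof.
have q_gt1 := card_finField_gt1 F.
apply/eqP; rewrite -(eqn_pmul2r (_ : 0 < #|F| - 1)%N) ?subn_gt0 //.
by rewrite card_points_sub_mul geometric_sum_mul // ltnW.
Qed.

Lemma card_points : #|[set: pt]| = (\sum_(i < N.+1) #|F| ^ i)%N.
Proof.
have := card_points_sub (1%:M : 'M[F]_N.+1); rewrite mxrank1 => <-.
by apply: eq_card => P; rewrite !inE submx1.
Qed.

End ProjectivePoints.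

Section Lines.
Variables (F : finFieldType) (N : nat).
Local Notation pt := (point F N).
Local Open Scope ring_scope.

Lemma span2P (u w v : 'rV[F]_N.+1) :
  reflect (exists a b, v = a *: u + b *: w) (v <= col_mx u w)%MS.
Proof.
rewrite -addsmxE; apply: (iffP sub_addsmxP) => [[[x y] /= ->] | [a [b ->]]].
  exists (x 0 0), (y 0 0).
  by rewrite {1}[x]mx11_scalar {1}[y]mx11_scalar !mul_scalar_mx.
by exists (a%:M, b%:M); rewrite /= !mul_scalar_mx.
Qed.

Lemma mem_pline (R P Q : pt) :
  (R \in pline P Q) = (pvec R <= col_mx (pvec P) (pvec Q))%MS.
Proof. by rewrite inE. Qed.

Lemma pline_l (P Q : pt) : P \in pline P Q.
Proof. by rewrite inE -addsmxE addsmxSl. Qed.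

Lemma pline_r (P Q : pt) : Q \in pline P Q.
Proof. by rewrite inE -addsmxE addsmxSr. Qed.

Lemma rank_pline (P Q : pt) : P != Q -> \rank (col_mx (pvec P) (pvec Q)) = 2%N.
Proof.
move=> PQ; apply/eqP; rewrite eqn_leq rank_leq_row /=.
have sP : (pvec P <= col_mx (pvec P) (pvec Q))%MS by rewrite -mem_pline pline_l.
rewrite ltnNge; apply: contra PQ => rank_le1.
have /eqmxP eqP_PQ : (pvec P == col_mx (pvec P) (pvec Q))%MS.
  by rewrite -(geq_leqif (mxrank_leqif_eq sP)) rank_rV pvec_neq0.
by apply/eqP/esym/pvec_sub_inj; rewrite eqP_PQ -mem_pline pline_r.
Qed.

Lemma pline_eq (P Q X Y : pt) : P != Q -> X != Y ->
  X \in pline P Q -> Y \in pline P Q -> pline X Y = pline P Q.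
Proof.
move=> PQ XY; rewrite !mem_pline => XPQ YPQ.
have sub : (col_mx (pvec X) (pvec Y) <= col_mx (pvec P) (pvec Q))%MS.
  by rewrite col_mx_sub XPQ YPQ.
have /eqmxP eqXY_PQ : (col_mx (pvec X) (pvec Y) == col_mx (pvec P) (pvec Q))%MS.
  by rewrite -(geq_leqif (mxrank_leqif_eq sub)) !rank_pline.
by apply/setP => R; rewrite !mem_pline eqXY_PQ.
Qed.

Lemma plinesP (l : {set pt}) :
  reflect (exists P Q, P != Q /\ l = pline P Q) (l \in plines F N).
Proof.
rewrite inE; apply: (iffP existsP).
  by move=> [P /existsP [Q /andP [PQ /eqP ->]]]; exists P, Q.
by move=> [P [Q [PQ ->]]]; exists P; apply/existsP; exists Q; rewrite PQ eqxx.
Qed.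

Lemma pline_plines (P Q : pt) : P != Q -> pline P Q \in plines F N.
Proof. by move=> PQ; apply/plinesP; exists P, Q. Qed.

Lemma plines_eq (l : {set pt}) (X Y : pt) : l \in plines F N -> X != Y ->
  X \in l -> Y \in l -> l = pline X Y.
Proof. by move=> /plinesP [P [Q [PQ ->]]] XY Xl Yl; rewrite (pline_eq PQ XY). Qed.

Lemma pline_collinear (P Q R : pt) : R \in pline P Q -> pcollinear P Q R.
Proof.
rewrite mem_pline /pcollinear => RPQ.
have sub : (col_mx (pvec P) (col_mx (pvec Q) (pvec R)) <= col_mx (pvec P) (pvec Q))%MS.
  by rewrite !col_mx_sub RPQ -!mem_pline pline_l pline_r.
exact: leq_trans (mxrankS sub) (rank_leq_row _).
Qed.

Definition secant (S l : {set pt}) := (l \in plines F N) && (1 < #|l :&: S|)%N.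

Lemma secant_pline (S : {set pt}) (X Y : pt) : X \in S -> Y \in S -> X != Y ->
  secant S (pline X Y).
Proof.
move=> XS YS XY; rewrite /secant pline_plines //.
by apply/card_gt1P; exists X, Y; rewrite !inE -!mem_pline pline_l pline_r XS YS.
Qed.

Lemma secant_plineP (S l : {set pt}) :
  secant S l -> exists X Y, [/\ X \in S, Y \in S, X != Y & l = pline X Y].
Proof.
move=> /andP [l_line /card_gt1P [X [Y [/setIP [Xl XS] /setIP [Yl YS] XY]]]].
by exists X, Y; rewrite (plines_eq l_line XY Xl Yl).
Qed.

Lemma secmult_gt0 (S : {set pt}) (Q : pt) :
  (0 < secmult S Q)%N = [exists l, secant S l && (Q \in l)].
Proof.
rewrite lt0n sum_nat_eq0 negb_forall; apply/existsP/existsP => -[l].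
  rewrite negb_imply => /andP [/andP [l_line /andP [Ql l_sec]] _].
  by exists l; rewrite /secant l_line l_sec Ql.
move=> /andP [/andP [l_line l_sec] Ql]; exists l.
by rewrite negb_imply l_line Ql l_sec -lt0n bin_gt0.
Qed.

End Lines.

Section Subplane.
Variables (F : finFieldType) (N m : nat).
Local Notation pt := (point F N).
Variables (S : {set pt}) (L : {set {set pt}}).
Hypothesis L_lines : L \subset plines F N.
Hypothesis L_join : forall P Q, P \in S -> Q \in S -> P != Q ->
  #|[set l in L | (P \in l) && (Q \in l)]| = 1%N.
Hypothesis L_meet : forall l1 l2, l1 \in L -> l2 \in L -> l1 != l2 ->
  #|l1 :&: l2 :&: S| = 1%N.
Hypothesis card_L_line : forall l, l \in L -> #|l :&: S| = m.+1.

Lemma pline_subplane (P Q : pt) : P \in S -> Q \in S -> P != Q -> pline P Q \in L.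
Proof.
move=> PS QS PQ; have /eqP /cards1P [l lPQ] := L_join PS QS PQ.
have /setIdP [lL /andP [Pl Ql]] : l \in [set l in L | (P \in l) && (Q \in l)].
  by rewrite lPQ set11.
by rewrite -(plines_eq (subsetP L_lines l lL) PQ Pl Ql).
Qed.

Lemma secant_subplane (l : {set pt}) : secant S l -> l \in L.
Proof.
by move=> /secant_plineP [X [Y [XS YS XY ->]]]; apply: pline_subplane.
Qed.

(* Count the pairs (X, Y) with X on the line P1 P2 and Y <> P3 on the line
   P3 X: each of the m + 1 points X gives m points Y, and each Y is reached
   exactly once, since the line P3 Y meets P1 P2 in a single point of S. *)
Lemma card_subplane (P1 P2 P3 : pt) : P1 \in S -> P2 \in S -> P3 \in S ->
  P1 != P2 -> P3 \notin pline P1 P2 -> #|S| = (m ^ 2 + m + 1)%N.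
Proof.
move=> P1S P2S P3S P12 P3l.
set l := pline P1 P2 in P3l *.
have lL : l \in L by apply: pline_subplane.
have P3X X : X \in l -> P3 != X by move=> Xl; apply: contraNneq P3l => ->.
have one_X Y : Y \in S :\ P3 -> #|[set X in l :&: S | Y \in pline P3 X]| = 1%N.
  move=> /setD1P [YP3 YS]; have P3Y : P3 != Y by rewrite eq_sym.
  have lPY : pline P3 Y \in L by apply: pline_subplane.
  have lPY_l : pline P3 Y != l by apply: contraNneq P3l => <-; apply: pline_l.
  rewrite -[RHS](L_meet lPY lL lPY_l); apply: eq_card => X.
  rewrite !inE -!mem_pline.
  apply/andP/andP => [[/andP [Xl XS] YPX] | [/andP [XPY Xl] XS]].
    by rewrite Xl XS andbT (pline_eq (P3X X Xl) P3Y (pline_l _ _) YPX) pline_r.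
  by rewrite Xl XS (pline_eq P3Y (P3X X Xl) (pline_l _ _) XPY) pline_r.
have m_Y X : X \in l :&: S -> #|[set Y in S :\ P3 | Y \in pline P3 X]| = m.
  move=> /setIP [Xl XS].
  have := card_L_line (pline_subplane P3S XS (P3X X Xl)).
  rewrite (cardsD1 P3) in_setI pline_l P3S add1n => -[<-].
  by apply: eq_card => Y; rewrite !inE; case: (Y == P3) => //=; apply: andbC.
have := double_counting (l :&: S) (S :\ P3) (fun X Y => Y \in pline P3 X).
rewrite (eq_bigr _ m_Y) (eq_bigr _ one_X) !sum_nat_const muln1 card_L_line //.
by rewrite (cardsD1 P3 S) P3S => <-; rewrite add1n; lia.
Qed.

Lemma subplane_third_point (P Q : pt) : (1 < m)%N -> P \in S -> Q \in S -> P != Q ->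
  exists2 Z, Z \in S & [&& Z != P, Z != Q & Z \in pline P Q].
Proof.
move=> m_gt1 PS QS PQ; have := card_L_line (pline_subplane PS QS PQ).
rewrite (cardsD1 P) (cardsD1 Q) !in_setD1 !in_setI pline_l pline_r PS QS eq_sym PQ.
move=> /eqP; rewrite /= !add1n !eqSS => /eqP card_rest.
have /card_gt0P [Z] : (0 < #|pline P Q :&: S :\ P :\ Q|)%N by rewrite -ltnS card_rest.
by rewrite !in_setD1 in_setI => /and4P [ZQ ZP Zl ZS]; exists Z; rewrite ?ZP ?ZQ.
Qed.

Lemma secant_unique (Q : pt) (l1 l2 : {set pt}) : Q \notin S ->
  secant S l1 -> Q \in l1 -> secant S l2 -> Q \in l2 -> l1 = l2.
Proof.
move=> QS l1_sec Ql1 l2_sec Ql2; apply/eqP; apply: contraT => l12.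
have l1L := secant_subplane l1_sec; have l2L := secant_subplane l2_sec.
have /eqP /cards1P [Z Z12] := L_meet l1L l2L l12.
have /setIP [/setIP [Zl1 Zl2] ZS] : Z \in l1 :&: l2 :&: S by rewrite Z12 set11.
have QZ : Q != Z by apply: contraNneq QS => ->.
have [/andP [l1_line _] /andP [l2_line _]] := conj l1_sec l2_sec.
by rewrite (plines_eq l1_line QZ Ql1 Zl1) (plines_eq l2_line QZ Ql2 Zl2) eqxx in l12.
Qed.

Lemma secmult_subplane (Q : pt) (l : {set pt}) : Q \notin S ->
  secant S l -> Q \in l -> secmult S Q = 'C(m.+1, 2).
Proof.
move=> QS l_sec Ql; rewrite /secmult (big_pred1 l) ?card_L_line ?secant_subplane //.
move=> l' /=; apply/idP/eqP => [/andP [l'_line /andP [Ql' l'_gt1]] | ->].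
  by apply: secant_unique QS _ Ql' l_sec Ql; rewrite /secant l'_line.
by case/andP: l_sec => -> ->; rewrite Ql.
Qed.

End Subplane.

Section Projection.
Variables (F : finFieldType) (N : nat).
Local Notation pt := (point F N).
Local Open Scope ring_scope.

(* Projecting from Q onto the cokernel of Q, a point X of S is identified
   with the line Q X; without secants through Q the projection is injective
   on S, and its image lies in a PG(N-1, F). *)
Lemma exists_secant (S : {set pt}) (Q : pt) :
  (\sum_(i < N) #|F| ^ i < #|S|)%N -> Q \notin S -> exists l, secant S l && (Q \in l).
Proof.
move=> card_S QS; apply/existsP; apply: contraTT card_S => /existsPn no_secant.
rewrite -leqNgt; set M := cokermx (pvec Q).
have rankM : \rank M = N by rewrite mxrank_coker rank_rV pvec_neq0 subn1.
have XM_neq0 X : X \in S -> pvec X *m M != 0.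
  move=> XS; apply: contraNneq QS => XM0.
  by rewrite -(@pvec_sub_inj _ _ X Q) // submxE XM0.
pose proj X := odflt X [pick P : pt | (pvec P == pvec X *m M)%MS].
have projE X : X \in S -> (pvec (proj X) == pvec X *m M)%MS.
  move=> XS; rewrite /proj; case: pickP => [P -> // | no_P].
  by have [P PX] := exists_pvec_eqmx (XM_neq0 X XS); rewrite no_P in PX.
have proj_inj : {in S &, injective proj}.
  move=> X Y XS YS projXY; apply/eqP; apply: contraT => XY.
  have /sub_rVP [c XMc] : (pvec X *m M <= pvec Y *m M)%MS.
    by rewrite -(eqmxP (projE X XS)) -(eqmxP (projE Y YS)) projXY.
  have /sub_rVP [d XcYd] : (pvec X - c *: pvec Y <= pvec Q)%MS.
    by rewrite submxE mulmxBl -scalemxAl XMc subrr.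
  have XQY : X \in pline Q Y.
    by rewrite mem_pline; apply/span2P; exists d, c; rewrite -XcYd subrK.
  have QY : Q != Y by apply: contraNneq QS => ->.
  have := no_secant (pline Q Y); rewrite pline_l andbT.
  by rewrite -(pline_eq QY XY XQY (pline_r _ _)) secant_pline.
have proj_sub : proj @: S \subset [set P : pt | (pvec P <= M)%MS].
  apply/subsetP => _ /imsetP [X XS ->]; rewrite inE.
  by rewrite (eqmxP (projE X XS)) submxMl.
rewrite -(card_in_imset proj_inj) (leq_trans (subset_leq_card proj_sub)) //.
by rewrite card_points_sub rankM.
Qed.

End Projection.

Section SubplaneOfOrder.
Variables (F : finFieldType) (N m : nat) (S : {set point F N}).
Hypothesis S_plane : subplane_of_order m S.

Lemma subplane_triangle : exists P1 P2 P3,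
  [/\ P1 \in S, P2 \in S, P3 \in S, P1 != P2 & ~~ pcollinear P1 P2 P3].
Proof.
have [_ [_ _ _ [P1 [P2 [P3 [P4 [P_S P_uniq P_noncol]]]]] _]] := S_plane.
exists P1, P2, P3; case/and4P: P_S => -> -> -> _; case/and4P: P_noncol => -> _ _ _.
by case/and3P: P_uniq; rewrite !inE negb_or => /andP [].
Qed.

Lemma card_subplane_of_order : #|S| = (m ^ 2 + m + 1)%N.
Proof.
have [L [L_lines L_join L_meet _ card_L]] := S_plane.
have [P1 [P2 [P3 [P1S P2S P3S P12 P123]]]] := subplane_triangle.
have P3l : P3 \notin pline P1 P2 by apply: contra P123; apply: pline_collinear.
exact: (card_subplane L_lines L_join L_meet card_L P1S P2S P3S P12 P3l).
Qed.

Lemma subplane_collinear_triple : (1 < m)%N -> exists X Y Z,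
  [/\ X \in S, Y \in S, Z \in S, X != Y & [&& Z != X, Z != Y & Z \in pline X Y]].
Proof.
move=> m_gt1; have [L [L_lines L_join _ _ card_L]] := S_plane.
have [X [Y [_ [XS YS _ XY _]]]] := subplane_triangle.
have [Z ZS ZXY] := subplane_third_point L_lines L_join card_L m_gt1 XS YS XY.
by exists X, Y, Z.
Qed.

Lemma secmult_subplane_of_order (Q : point F N) (l : {set point F N}) :
  Q \notin S -> secant S l -> Q \in l -> secmult S Q = 'C(m.+1, 2).
Proof.
move=> QS l_sec Ql; have [L [L_lines L_join L_meet _ card_L]] := S_plane.
exact: (secmult_subplane L_lines L_join L_meet card_L QS l_sec Ql).
Qed.

End SubplaneOfOrder.

Lemma spans_noncollinear (F : finFieldType) (S : {set point F 2}) (P1 P2 P3 : point F 2) :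
  P1 \in S -> P2 \in S -> P3 \in S -> ~~ pcollinear P1 P2 P3 -> spans S.
Proof.
move=> P1S P2S P3S; rewrite /pcollinear -ltnNge /spans /row_full => rank3.
apply/eqP/anti_leq; rewrite rank_leq_col (leq_trans rank3) // mxrankS //.
rewrite !col_mx_sub; apply/and3P.
by split; [apply: (sumsmx_sup P1) | apply: (sumsmx_sup P2) | apply: (sumsmx_sup P3)];
  rewrite ?genmxE.
Qed.

Lemma spans_subplane_of_order (F : finFieldType) (m : nat) (S : {set point F 2}) :
  subplane_of_order m S -> spans S.
Proof.
move=> /subplane_triangle [P1 [P2 [P3 [P1S P2S P3S _ P123]]]].
exact: spans_noncollinear P1S P2S P3S P123.
Qed.

Section BaerSubplane.
Variables (F : finFieldType) (r : nat) (B : {set point F 2}).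
Hypothesis cardF : #|F| = (r ^ 2)%N.
Hypothesis B_baer : baer_subplane r B.

Lemma baer_order_gt1 : (1 < r)%N.
Proof. by have := card_finField_gt1 F; rewrite cardF; case: (r) => [|[]]. Qed.

Lemma baer_subplane_secant (Q : point F 2) :
  Q \notin B -> exists l, secant B l && (Q \in l).
Proof.
apply: exists_secant; rewrite (card_subplane_of_order B_baer).
rewrite !big_ord_recr big_ord0 /= cardF expn0 expn1 add0n [1 + _]addnC -addnA.
by rewrite ltn_add2l addn1 ltnS ltnW // baer_order_gt1.
Qed.

Lemma baer_subplane_proper : B != [set: point F 2].
Proof.
have r_gt1 := baer_order_gt1.
apply/negP => /eqP BT; have := card_points F 2.
rewrite -BT (card_subplane_of_order B_baer) !big_ord_recr big_ord0 /= cardF.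
rewrite expn0 expn1 add0n addnAC [1 + _]addnC => /addnI r_q2.
have r_lt_q : (r < r ^ 2)%N by rewrite -{1}(expn1 r) ltn_exp2l.
have q_le_q2 : (r ^ 2 <= (r ^ 2) ^ 2)%N.
  by rewrite -[(r ^ 2) ^ 2]mulnn leq_pmulr // expn_gt0 ltnW.
by have := leq_trans r_lt_q q_le_q2; rewrite -r_q2 ltnn.
Qed.

End BaerSubplane.

Section Weight.
Variables (F : finFieldType) (n : nat).
Local Notation rv := 'rV[F]_n.
Local Open Scope ring_scope.

Definition supp (e : rv) : {set 'I_n} := [set k | e 0 k != 0].

Lemma wt_supp (e : rv) : wt e = #|supp e|.
Proof. by []. Qed.

Lemma wt_eq0 (e : rv) : (wt e == 0%N) = (e == 0).
Proof.
rewrite wt_supp cards_eq0; apply/eqP/eqP => [e0 | ->].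
  apply/rowP => k; rewrite mxE.
  by move/setP/(_ k): e0; rewrite /supp !inE => /negbFE /eqP.
by apply/setP => k; rewrite !inE mxE eqxx.
Qed.

Lemma wt0 : wt (0 : rv) = 0%N.
Proof. by apply/eqP; rewrite wt_eq0. Qed.

Lemma wt_max (e : rv) : (wt e <= n)%N.
Proof. by rewrite wt_supp (leq_trans (max_card _)) ?card_ord. Qed.

Local Notation dl i := (delta_mx 0 i : rv).

Lemma dl2E a i b j k : (a *: dl i + b *: dl j) 0 k = a * (k == i)%:R + b * (k == j)%:R.
Proof. by rewrite !mxE !eqxx. Qed.

Lemma supp_dl2 a i b j : supp (a *: dl i + b *: dl j) \subset [set i; j].
Proof.
apply/subsetP => k; rewrite !inE dl2E.
by case: (k == i); case: (k == j); rewrite ?mulr0 ?addr0 ?eqxx.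
Qed.

Lemma wt_dl2 a i b j : (wt (a *: dl i + b *: dl j) <= 2)%N.
Proof.
rewrite wt_supp (leq_trans (subset_leq_card (supp_dl2 a i b j))) //.
by rewrite cards2; case: (i != j).
Qed.

Lemma wt_dl1 a i : (wt (a *: dl i) <= 1)%N.
Proof.
have := supp_dl2 a i 0 i; rewrite scale0r addr0 setUid wt_supp.
by move/subset_leq_card; rewrite cards1.
Qed.

Lemma supp_dl2_eq a i b j : i != j -> a != 0 -> b != 0 ->
  supp (a *: dl i + b *: dl j) = [set i; j].
Proof.
move=> ij a0 b0; apply/setP => k; rewrite !inE dl2E.
have [-> | ki] := eqVneq k i; first by rewrite (negbTE ij) mulr1 mulr0 addr0 a0.
have [_ | kj] /= := eqVneq k j; first by rewrite mulr1 mulr0 add0r b0.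
by rewrite !mulr0 addr0 eqxx.
Qed.

Lemma supp_sub2 (e : rv) i j : supp e \subset [set i; j] -> i != j ->
  e = e 0 i *: dl i + e 0 j *: dl j.
Proof.
move=> /subsetP eij ij; apply/rowP => k; rewrite dl2E.
have [-> | ki] := eqVneq k i; first by rewrite (negbTE ij) mulr1 mulr0 addr0.
have [-> | kj] := eqVneq k j; first by rewrite mulr1 mulr0 add0r.
rewrite !mulr0 addr0; apply/eqP; apply: contraR ki => ek.
by move: (eij k); rewrite !inE ek (negbTE kj) orbF => /(_ isT).
Qed.

Lemma supp_sub1 (e : rv) i : supp e \subset [set i] -> e = e 0 i *: dl i.
Proof.
move=> /subsetP ei; apply/rowP => k; rewrite !mxE eqxx.
have [-> | ki] := eqVneq k i; first by rewrite mulr1.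
by rewrite mulr0; apply/eqP; apply: contraR ki => ek; rewrite -in_set1 ei ?inE.
Qed.

Lemma wtD (e1 e2 : rv) : (wt (e1 + e2) <= wt e1 + wt e2)%N.
Proof.
rewrite !wt_supp (leq_trans _ (leq_card_setU _ _)) // subset_leq_card //.
apply/subsetP => k; rewrite !inE mxE; apply: contraR; rewrite negb_or !negbK.
by move=> /andP [/eqP -> /eqP ->]; rewrite addr0.
Qed.

Lemma wt_le2_dl2 (e : rv) : (wt e <= 2)%N ->
  e = 0 \/ exists i j a b, e = a *: dl i + b *: dl j.
Proof.
rewrite wt_supp leq_eqVlt ltnS leq_eqVlt ltnS leqn0.
case/or3P => [/cards2P [i [j [ij eij]]] | /cards1P [i ei] | /eqP e0].
- by right; exists i, j, (e 0 i), (e 0 j); apply: supp_sub2; rewrite ?eij.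
- right; exists i, i, (e 0 i), 0; rewrite scale0r addr0.
  by apply: supp_sub1; rewrite ei.
- by left; apply/eqP; rewrite -wt_eq0 wt_supp e0.
Qed.

End Weight.

Arguments supp {F n}.

Section ParityCheckCode.
Variables (F : finFieldType) (N n : nat).
Local Notation pt := (point F N).
Local Open Scope ring_scope.
Variables (H : 'M[F]_(N.+1, n)) (S : {set pt}) (Pt : 'I_n -> pt).
Hypothesis Pt_inj : injective Pt.
Hypothesis S_Pt : S = [set Pt i | i : 'I_n].
Hypothesis col_H : forall i, ((col i H)^T == pvec (Pt i))%MS.
Local Notation C := (code_of_pcm H).
Local Notation dl i := (delta_mx 0 i : 'rV[F]_n).
Local Notation hcol i := (row i H^T).

Lemma hcol_eqmx i : (hcol i == pvec (Pt i))%MS.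
Proof. by rewrite -tr_col; apply: col_H. Qed.

Lemma pvec_sub_hcol i : (pvec (Pt i) <= hcol i)%MS.
Proof. by case/andP: (hcol_eqmx i). Qed.

Lemma sub_hcol (Q : pt) i : (pvec Q <= hcol i)%MS -> Q = Pt i.
Proof. by rewrite (eqmxP (hcol_eqmx i)); apply: pvec_sub_inj. Qed.

Lemma hcol_neq0 i : hcol i != 0.
Proof. by rewrite -mxrank_eq0 (eqmxP (hcol_eqmx i)) mxrank_eq0 pvec_neq0. Qed.

Lemma sub_hcol2 (v : 'rV[F]_N.+1) i j :
  (v <= col_mx (hcol i) (hcol j))%MS = (v <= col_mx (pvec (Pt i)) (pvec (Pt j)))%MS.
Proof.
by rewrite -!addsmxE (adds_eqmx (eqmxP (hcol_eqmx i)) (eqmxP (hcol_eqmx j))).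
Qed.

Lemma mul_dl2 a i b j : (a *: dl i + b *: dl j) *m H^T = a *: hcol i + b *: hcol j.
Proof. by rewrite mulmxDl -!scalemxAl -!rowE. Qed.

Lemma mem_code x : (x \in codeset C) = (x *m H^T == 0).
Proof. by rewrite inE sub_kermx. Qed.

Lemma Pt_in_S i : Pt i \in S.
Proof. by rewrite S_Pt imset_f. Qed.

Lemma in_S_Pt (Q : pt) : Q \in S -> exists i, Q = Pt i.
Proof. by rewrite S_Pt => /imsetP [i _ ->]; exists i. Qed.

Lemma card_S : #|S| = n.
Proof. by rewrite S_Pt card_imset // card_ord. Qed.

Lemma row_full_pcm : spans S -> row_full H^T.
Proof.
move=> /eqP full; rewrite /row_full eqn_leq rank_leq_col /=.
rewrite -[X in (X <= _)%N]full mxrankS //; apply/sumsmx_subP => _ /in_S_Pt [i ->].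
by rewrite genmxE (submx_trans (pvec_sub_hcol i)) ?row_sub.
Qed.

Lemma code_dim_pcm : spans S -> code_dim C = (n - N.+1)%N.
Proof. by move=> /row_full_pcm /eqP rankH; rewrite /code_dim mxrank_ker rankH. Qed.

(* Distinct points of PG(N, F) have independent coordinate vectors. *)
Lemma syndrome0_wt_le2 e : e *m H^T = 0 -> (wt e <= 2)%N -> e = 0.
Proof.
move=> e0 /wt_le2_dl2 [// | [i [j [a [b ee]]]]]; move: e0; rewrite ee mul_dl2 => /eqP.
have [-> | ij] := eqVneq i j.
  rewrite -!scalerDl !scaler_eq0 (negbTE (hcol_neq0 j)) orbF.
  by move=> /eqP ->; rewrite scale0r.
rewrite addr_eq0 => /eqP abh.
have a0 : a = 0.
  apply: contraTeq ij => a_neq0; apply/negPn/eqP/Pt_inj/sub_hcol.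
  apply: submx_trans (pvec_sub_hcol i) _; apply/sub_rVP; exists (- (a^-1 * b)).
  by rewrite -[hcol i](scalerK a_neq0) abh scalerN scalerA scaleNr.
move: abh; rewrite a0 scale0r => /esym /eqP; rewrite oppr_eq0 scaler_eq0.
by rewrite (negbTE (hcol_neq0 j)) orbF => /eqP ->; rewrite !scale0r addr0.
Qed.

Lemma min_dist_pcm (X Y Z : pt) : X \in S -> Y \in S -> Z \in S ->
  X != Y -> Z != X -> Z != Y -> Z \in pline X Y -> min_dist C = 3%N.
Proof.
move=> XS YS ZS XY ZX ZY ZXY; apply/eqP; rewrite eqn_leq; apply/andP; split.
  have [[i Xi] [j Yj] [k Zk]] := And3 (in_S_Pt XS) (in_S_Pt YS) (in_S_Pt ZS).
  rewrite {}Xi {}Yj {}Zk in XY ZX ZY ZXY.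
  have /span2P [a [b hk]] : (hcol k <= col_mx (hcol i) (hcol j))%MS.
    by rewrite sub_hcol2 (eqmxP (hcol_eqmx k)) -mem_pline.
  set c := a *: dl i + b *: dl j + (-1) *: dl k.
  have c_neq0 : c != 0.
    have ki : (k == i) = false by apply: contraNF ZX => /eqP ->.
    have kj : (k == j) = false by apply: contraNF ZY => /eqP ->.
    apply/eqP => /rowP /(_ k); rewrite !mxE !eqxx ki kj /= !mulr0 !add0r mulr1.
    by move/eqP; rewrite oppr_eq0 oner_eq0.
  have cC : c \in codeset C.
    by rewrite mem_code mulmxDl mul_dl2 -scalemxAl -rowE -hk scaleN1r subrr.
  rewrite /min_dist; apply: leq_trans
    (@geq_bigminn_cond _ (fun c => (c \in codeset C) && (c != 0)) (@wt F n) n c _) _.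
    by rewrite cC c_neq0.
  by rewrite (leq_trans (wtD _ _)) // (leq_add (wt_dl2 _ _ _ _) (wt_dl1 _ _)).
apply: leq_bigminn => [|c /andP [cC c_neq0]].
  rewrite -card_S; apply/card_gt2P; exists X, Y, Z.
  by split; split; rewrite // eq_sym.
rewrite ltnNge; apply: contra c_neq0 => wt_c; apply/eqP.
by apply: syndrome0_wt_le2 => //; apply/eqP; rewrite -mem_code.
Qed.

Lemma dist_code_le_wt x e : e *m H^T = x *m H^T -> (dist_code C x <= wt e)%N.
Proof.
move=> eH; apply: leq_trans (@geq_bigminn_cond _ (fun c => c \in codeset C) (hdist x) n
  (x - e) _) _; first by rewrite mem_code mulmxBl eH subrr.
by rewrite /hdist subKr.
Qed.

Lemma syndrome_hcol (s : 'rV[F]_N.+1) i : (s <= hcol i)%MS ->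
  exists2 e, e *m H^T = s & (wt e <= 1)%N.
Proof.
by move=> /sub_rVP [a ->]; exists (a *: dl i); rewrite ?wt_dl1 // -scalemxAl -rowE.
Qed.

Lemma syndrome_hcol2 (s : 'rV[F]_N.+1) i j : (s <= col_mx (hcol i) (hcol j))%MS ->
  exists2 e, e *m H^T = s & (wt e <= 2)%N.
Proof.
by move=> /span2P [a [b ->]]; exists (a *: dl i + b *: dl j); rewrite ?mul_dl2 ?wt_dl2.
Qed.

Lemma wt_ge2_syndrome (Q : pt) e : Q \notin S -> (pvec Q <= e *m H^T)%MS -> (2 <= wt e)%N.
Proof.
move=> QS Qe; rewrite ltnNge; apply/negP => wt_e.
have /set0Pn [i ei] : supp e != set0.
  rewrite -cards_eq0 -wt_supp wt_eq0; apply: contraNneq (pvec_neq0 Q) => e0.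
  by move: Qe; rewrite e0 mul0mx => /submx0null ->.
have ei1 : supp e \subset [set i].
  apply/subsetP => k ek; rewrite inE; apply: contraTT wt_e => ki.
  by rewrite wt_supp -ltnNge; apply/card_gt1P; exists k, i.
have Qi : (pvec Q <= hcol i)%MS.
  apply: submx_trans Qe _; rewrite (supp_sub1 ei1) -scalemxAl -rowE.
  exact: scalemx_sub (submx_refl _).
by rewrite (sub_hcol Qi) Pt_in_S in QS.
Qed.

Lemma dist_code_ge2 x (Q : pt) : Q \notin S -> (pvec Q <= x *m H^T)%MS ->
  (2 <= dist_code C x)%N.
Proof.
move=> QS Qx; have wt_ge2 c : c \in codeset C -> (2 <= hdist x c)%N.
  rewrite mem_code => /eqP cH; apply: (wt_ge2_syndrome QS).
  by rewrite mulmxBl cH subr0.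
apply: leq_bigminn (leq_trans (wt_ge2 0 _) (wt_max _)) wt_ge2.
by rewrite mem_code mul0mx.
Qed.

Section Covering.
Hypothesis on_secant : forall Q, Q \notin S -> exists l, secant S l && (Q \in l).

Lemma syndrome_wt_le2 (s : 'rV[F]_N.+1) : exists2 e, e *m H^T = s & (wt e <= 2)%N.
Proof.
have [-> | s_neq0] := eqVneq s 0; first by exists 0; rewrite ?mul0mx ?wt0.
have [Q /andP [Qs sQ]] := exists_pvec_eqmx s_neq0.
have [/in_S_Pt [i Qi] | QS] := boolP (Q \in S).
  rewrite Qi in sQ; have [e eH e_le1] := syndrome_hcol (submx_trans sQ (pvec_sub_hcol i)).
  by exists e; rewrite // (leq_trans e_le1).
have [l /andP [/secant_plineP [X [Y [XS YS _ ->]]] QXY]] := on_secant QS.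
have [[i Xi] [j Yj]] := conj (in_S_Pt XS) (in_S_Pt YS).
by apply: (@syndrome_hcol2 _ i j); rewrite sub_hcol2 -Xi -Yj (submx_trans sQ) -?mem_pline.
Qed.

Lemma covering_radius_pcm : spans S -> S != [set: pt] -> covering_radius C = 2%N.
Proof.
move=> S_spans S_proper; apply/eqP; rewrite eqn_leq; apply/andP; split.
  apply/bigmax_leqP => x _; have [e eH e_le2] := syndrome_wt_le2 (x *m H^T).
  exact: leq_trans (dist_code_le_wt eH) e_le2.
have /subsetPn [Q _ QS] : ~~ ([set: pt] \subset S) by rewrite subTset.
have [G GH] := row_fullP (row_full_pcm S_spans).
apply: leq_trans (leq_bigmax (pvec Q *m G)).
by apply: (dist_code_ge2 QS); rewrite -mulmxA GH mulmx1.
Qed.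

End Covering.

Section DistanceTwo.
Variables (x : 'rV[F]_n) (Q : pt).
Hypothesis dist_x : dist_code C x = 2%N.
Hypothesis Qx : (pvec Q == x *m H^T)%MS.

Let E := [set e : 'rV[F]_n | (e *m H^T == x *m H^T) && (wt e == 2%N)].

Lemma notin_S_dist2 : Q \notin S.
Proof.
apply/negP => /in_S_Pt [i Qi]; move: Qx; rewrite Qi => /andP [_ xQ].
have [e eH e_le1] := syndrome_hcol (submx_trans xQ (pvec_sub_hcol i)).
by have := leq_trans (dist_code_le_wt eH) e_le1; rewrite dist_x.
Qed.

(* Two error patterns of weight 2 with the same syndrome and the same support
   differ by a codeword of weight at most 2. *)
Lemma card_dist2_supp :
  #|[set c in codeset C | hdist x c == 2%N]| = #|supp @: E|.
Proof.
have -> : [set c in codeset C | hdist x c == 2%N] = [set x - e | e in E].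
  apply/setP => c; rewrite inE; apply/andP/imsetP => [[cC xc2] | [e]].
    exists (x - c); last by rewrite subKr.
    by move: cC; rewrite mem_code inE mulmxBl => /eqP ->; rewrite subr0 eqxx.
  rewrite inE => /andP [/eqP eH e2] ->.
  by rewrite mem_code mulmxBl eH subrr /hdist subKr.
rewrite [LHS]card_in_imset; last by move=> e1 e2 _ _; apply: subrI.
rewrite card_in_imset // => e1 e2; rewrite !inE => /andP [/eqP e1H /eqP e1w].
move=> /andP [/eqP e2H _] supp12; apply/subr0_eq/syndrome0_wt_le2.
  by rewrite mulmxBl e1H e2H subrr.
rewrite -e1w !wt_supp subset_leq_card //; apply/subsetP => k.
rewrite !inE !mxE; apply: contraR => /negPn /eqP e1k.
have : k \notin supp e2 by rewrite -supp12 inE e1k eqxx.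
by rewrite inE negbK e1k => /eqP ->; rewrite subrr ?eqxx.
Qed.

Lemma card_supp_dist2 (A : {set 'I_n}) : A \in supp @: E -> #|A| = 2%N.
Proof. by move=> /imsetP [e]; rewrite inE => /andP [_ /eqP e2] ->; rewrite -wt_supp. Qed.

Lemma mem_supp_dist2 i j : i != j ->
  ([set i; j] \in supp @: E) = (Q \in pline (Pt i) (Pt j)).
Proof.
move=> ij; have QS := notin_S_dist2; have /andP [Qsub subQ] := Qx.
apply/imsetP/idP => [[e] | QPij].
  rewrite inE => /andP [/eqP eH /eqP e2] eij.
  rewrite mem_pline -sub_hcol2 (submx_trans Qsub) // -eH.
  rewrite (supp_sub2 (_ : supp e \subset [set i; j])) ?eij // mul_dl2.
  by apply/span2P; exists (e 0 i), (e 0 j).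
have /span2P [a [b xab]] : (x *m H^T <= col_mx (hcol i) (hcol j))%MS.
  by rewrite sub_hcol2 (submx_trans subQ) -?mem_pline.
have Qnot k c : (pvec Q <= c *: hcol k)%MS -> False.
  move=> Qk; have := sub_hcol (submx_trans Qk (scalemx_sub c (submx_refl _))).
  by move=> Qk'; rewrite Qk' Pt_in_S in QS.
have a0 : a != 0.
  by apply/eqP => a0; apply: (Qnot j b); move: Qsub; rewrite xab a0 scale0r add0r.
have b0 : b != 0.
  by apply/eqP => b0; apply: (Qnot i a); move: Qsub; rewrite xab b0 scale0r addr0.
exists (a *: dl i + b *: dl j); last by rewrite supp_dl2_eq.
by rewrite inE mul_dl2 -xab eqxx wt_supp supp_dl2_eq // cards2 ij.
Qed.

(* Double counting of the incidences between the supports in [supp @: E] and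
   the secants through Q: each support {i, j} spans exactly one of them, the
   line Pt i Pt j, and a secant l carries all 2-subsets of its points. *)
Lemma card_dist2_codewords :
  #|[set c in codeset C | hdist x c == 2%N]| = secmult S Q.
Proof.
rewrite card_dist2_supp; set D := supp @: E.
set L := [set l | secant S l && (Q \in l)].
pose I (l : {set pt}) := [set i | Pt i \in l].
have card_I (l : {set pt}) : #|I l| = #|l :&: S|.
  have -> : l :&: S = Pt @: I l.
    apply/setP => Z; rewrite inE; apply/andP/imsetP => [[Zl /in_S_Pt [i Zi]] | [i]].
      by exists i; rewrite // inE -Zi.
    by rewrite inE => Pil ->; rewrite Pil Pt_in_S.
  by rewrite card_imset.
have one_line A : A \in D -> #|[set l in L | A \subset I l]| = 1%N.
  move=> AD; have /eqP /cards2P [i [j [ij Aij]]] := card_supp_dist2 AD.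
  move: AD; rewrite Aij mem_supp_dist2 // => QPij.
  have Pij : Pt i != Pt j by apply: contra ij => /eqP /Pt_inj ->.
  apply/eqP/cards1P; exists (pline (Pt i) (Pt j)); apply/setP => l; rewrite !inE.
  apply/andP/eqP => [[/andP [/andP [l_line _] _] /subsetP Al] | ->].
    have [Pil Pjl] : Pt i \in l /\ Pt j \in l.
      by split; [move: (Al i) | move: (Al j)]; rewrite !inE eqxx ?orbT => /(_ isT).
    exact: plines_eq l_line Pij Pil Pjl.
  rewrite secant_pline ?Pt_in_S // QPij; split=> //.
  apply/subsetP => k; rewrite !inE => /orP [] /eqP ->;
    by rewrite -mem_pline ?pline_l ?pline_r.
have all_pairs l : l \in L -> #|[set A in D | A \subset I l]| = 'C(#|l :&: S|, 2).
  rewrite inE => /andP [/andP [l_line _] Ql]; rewrite -card_I -cards_draws.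
  apply: eq_card => A; rewrite !inE; apply/andP/andP => [[AD ->] | [AI A2]].
    by rewrite card_supp_dist2.
  have /cards2P [i [j [ij Aij]]] := A2; split=> //.
  move: AI; rewrite Aij mem_supp_dist2 // => /subsetP AI.
  have [Pil Pjl] : Pt i \in l /\ Pt j \in l.
    by split; [move: (AI i) | move: (AI j)]; rewrite !inE eqxx ?orbT => /(_ isT).
  have Pij : Pt i != Pt j by apply: contra ij => /eqP /Pt_inj ->.
  by rewrite -(plines_eq l_line Pij Pil Pjl).
have := double_counting D L (fun A l => A \subset I l).
rewrite (eq_bigr _ one_line) (eq_bigr _ all_pairs) sum1_card => ->.
apply: eq_bigl => l; rewrite inE /secant.
by rewrite -andbA [(_ < _)%N && _]andbC.
Qed.

End DistanceTwo.

Lemma is_APMCF_pcm (mu : nat) : optimal_saturating S mu -> (0 < mu)%N ->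
  is_APMCF C 2%N mu.
Proof.
move=> [[S_spans S_proper _] secmult_mu] mu_gt0.
have on_secant Q : Q \notin S -> exists l, secant S l && (Q \in l).
  by move=> QS; apply/existsP; rewrite -secmult_gt0 secmult_mu.
split=> [|x dist_x]; first exact: covering_radius_pcm.
have s_neq0 : x *m H^T != 0.
  apply/eqP => xH0; have := @dist_code_le_wt x 0.
  by rewrite mul0mx xH0 wt0 dist_x => /(_ erefl).
have [Q Qx] := exists_pvec_eqmx s_neq0.
by rewrite (card_dist2_codewords dist_x Qx) secmult_mu // (notin_S_dist2 dist_x Qx).
Qed.

End ParityCheckCode.

Theorem proposition5p4 (F : finFieldType) (r : nat) (B : {set point F 2}) :
  #|F| = (r ^ 2)%N ->
  baer_subplane r B ->
  let q := (r ^ 2)%N in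
  let n := (q + r + 1)%N in
  let mu := ((q + r) %/ 2)%N in
  [/\ #|B| = n,
      optimal_saturating B mu &
      forall H : 'M[F]_(3, n), pcm_of_points H B ->
        let C := code_of_pcm H in
        [/\ code_dim C = (n - 3)%N, min_dist C = 3%N,
            covering_radius C = 2%N & is_APMCF C 2 mu]].
Proof.
move=> cardF B_baer q n mu; have r_gt1 := baer_order_gt1 cardF.
have B_spans : spans B := spans_subplane_of_order B_baer.
have mu_bin : mu = 'C(r.+1, 2) by rewrite bin2 -divn2 mulSn mulnn addnC.
have secmult_mu Q : Q \notin B -> secmult B Q = mu.
  move=> QB; have [l /andP [l_sec Ql]] := baer_subplane_secant cardF B_baer QB.
  by rewrite mu_bin (secmult_subplane_of_order B_baer QB l_sec Ql).
have B_opt : optimal_saturating B mu.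
  split=> [|Q /secmult_mu ->] //; split=> [|| Q /secmult_mu ->] //.
  exact: baer_subplane_proper cardF B_baer.
split=> [|//|H [Pt [Pt_inj BPt colH]] C]; first exact: card_subplane_of_order B_baer.
have [X [Y [Z [XB YB ZB XY /and3P [ZX ZY ZXY]]]]] :=
  subplane_collinear_triple B_baer r_gt1.
split.
- exact: code_dim_pcm BPt colH B_spans.
- exact: (min_dist_pcm Pt_inj BPt colH XB YB ZB XY ZX ZY ZXY).
- exact: (covering_radius_pcm BPt colH (baer_subplane_secant cardF B_baer) B_spans
           (baer_subplane_proper cardF B_baer)).
- by apply: (is_APMCF_pcm Pt_inj BPt colH B_opt); rewrite mu_bin bin_gt0 ltnS ltnW.
Qed.
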